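(* Let $\sum_n x_n$ be an absolutely convergent series in a Banach space $X$, and let $k,j\in\mathbb N$ be such that $x_k=x_{k+1}=\dots=x_{k+2j-2}$. Then $j x_k\in S(E(x_n))$.
   Context: The achievement set of an absolutely convergent series $\sum_n x_n$ is $E(x_n):=\{\sum_{n\in A}x_n:\ A\subset\mathbb N\}$. For a subset $A$ of the additive group $X$, the spectre is $S(A):=\{z\in X:\ \forall_{a\in A}\ (a+z\in A \text{ or } a-z\in A)\}$. *)

From HB Require Import structures.
From mathcomp Require Import all_boot all_order all_algebra.
From mathcomp Require Import all_classical all_reals all_analysis.
Set Implicit Arguments. Unset Strict Implicit. Unset Printing Implicit Defensive.
Import Order.TTheory GRing.Theory Num.Theory.
Import numFieldNormedType.Exports.
Local Open Scope classical_set_scope.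
Local Open Scope ring_scope.

Definition abs_convergent (R : realType) (X : normedModType R) (x : nat -> X) : Prop :=
  cvgn (series (fun n => `|x n|)).

Definition subsum (R : realType) (X : normedModType R) (x : nat -> X) (A : set nat) : X :=
  limn (series (fun n => if `[< A n >] then x n else 0)).

Definition achievement_set (R : realType) (X : normedModType R) (x : nat -> X) : set X :=
  [set s | exists A : set nat, s = subsum x A].

Definition spectre (X : zmodType) (A : set X) : set X :=
  [set z | forall a, A a -> A (a + z) \/ A (a - z)].

From HB Require Import structures.
From mathcomp Require Import all_boot all_order all_algebra.
From mathcomp Require Import all_classical all_reals all_analysis.
From mathcomp Require Import zify.
Import Order.TTheory GRing.Theory Num.Theory.
Import numFieldNormedType.Exports.
Local Open Scope classical_set_scope.
Local Open Scope ring_scope.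

(* Among the 2j-1 equal terms x_k, ..., x_(k+2j-2), either at least j lie
   in A or at least j lie outside A.  Removing j of them from A, resp.
   adding j of them to A, gives a subset B with sum(B) = sum(A) - j x_k,
   resp. sum(A) + j x_k; absolute convergence makes every subsum exist, so
   these finite modifications act additively on subsums. *)

Lemma filter_half_choice {T : eqType} (P : pred T) (r : seq T) (j : nat) :
  (2 * j - 1 <= size r)%N ->
  exists t, [/\ subseq t r, size t = j & all P t || all (predC P) t].
Proof.
move=> hr; have := count_predC P r; rewrite -!size_filter.
have [hP|hnP] := leqP j (size (seq.filter P r)) => hcount.
- exists (take j (seq.filter P r)); split.
  + exact: subseq_trans (take_subseq _ _) (filter_subseq _ _).
  + exact: size_takel.
  + by apply/orP; left; apply/allP=> y /mem_take; exact: (allP (filter_all P r)).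
- exists (take j (seq.filter (predC P) r)); split.
  + exact: subseq_trans (take_subseq _ _) (filter_subseq _ _).
  + by apply: size_takel; lia.
  + by apply/orP; right; apply/allP=> y /mem_take; exact: (allP (filter_all _ r)).
Qed.

Section Subsums.
Context {R : realType} {X : completeNormedModType R} {x : nat -> X}.
Hypothesis hx : abs_convergent x.

Lemma subsum_cvg (A : set nat) :
  cvgn (series (fun n => if `[< A n >] then x n else 0)).
Proof.
apply: normed_cvg; apply: series_le_cvg hx => n //=.
by case: ifP; rewrite ?normr0.
Qed.

Lemma series_dirac_cvg (n : nat) :
  series (fun m => if m == n then x n else 0) @ \oo --> x n.
Proof.
apply: cvg_near_cst; near=> N.
have nN : n \in index_iota 0 N by rewrite mem_index_iota; near: N; exists n.+1.
rewrite /series /= (bigD1_seq n nN (iota_uniq _ _)) eqxx big1 => [|m /negbTE -> //].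
exact: addr0.
Unshelve. all: by end_near.
Qed.

Lemma subsum_setU1 (A : set nat) (n : nat) :
  ~ A n -> subsum x (n |` A) = subsum x A + x n.
Proof.
move=> An; rewrite /subsum.
have -> : (fun m => if `[< (n |` A) m >] then x m else 0) =
          (fun m => if `[< A m >] then x m else 0) \+
          (fun m => if m == n then x n else 0).
  apply/funext => m /=; case: (eqVneq m n) => [->|mn].
    by rewrite (asboolT (_ : (n |` A) n)) ?asboolF ?add0r //; left.
  rewrite addr0; congr (if _ then _ else _); apply: asbool_equiv_eq.
  split=> [[m_eq_n|//]|]; last by right.
  by move: mn; rewrite m_eq_n eqxx.
have dirac := series_dirac_cvg n.
by rewrite seriesD limD ?(cvg_lim _ dirac) //; exact: subsum_cvg.
Qed.

Lemma subsum_setU_const_run (A : set nat) (c : X) (s : seq nat) :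
  uniq s -> {in s, forall n, x n = c /\ ~ A n} ->
  subsum x ([set` s] `|` A) = subsum x A + c *+ size s.
Proof.
elim: s => [|n s IH] /=; first by rewrite set_nil set0U addr0.
move=> /andP[ns us] hs; have [xn An] := hs n (mem_head _ _).
have -> : [set` n :: s] `|` A = n |` ([set` s] `|` A).
  apply/seteqP; split=> m /=; rewrite inE.
  - by case=> [/orP[/eqP|ms]|Am]; [left | right; left | right; right].
  - by case=> [->|[ms|Am]]; [left; rewrite eqxx | left; rewrite ms orbT | right].
rewrite subsum_setU1 ?IH ?xn ?mulrSr ?addrA //.
  by move=> m ms; apply: hs; rewrite inE ms orbT.
by case=> [/= n_s|//]; rewrite n_s in ns.
Qed.

End Subsums.

Theorem mainTheorem12 (R : realType) (X : completeNormedModType R)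
  (x : nat -> X) (k j : nat) :
  abs_convergent x ->
  (0 < j)%N ->
  (forall i : nat, (i <= 2 * j - 2)%N -> x (k + i)%N = x k) ->
  spectre (achievement_set x) (x k *+ j).
Proof.
move=> hx _ hrun _ [A ->].
pose r := iota k (2 * j - 1).
have xr : {in r, forall n, x n = x k}.
  move=> n; rewrite mem_iota => /andP[kn nk].
  by rewrite -(subnKC kn) hrun //; lia.
have [t [tr tj tA]] := filter_half_choice (fun n => `[< A n >]) r j
  (eq_leq (esym (size_iota _ _))).
have ut : uniq t := subseq_uniq tr (iota_uniq _ _).
have xt : {in t, forall n, x n = x k} := fun n nt => xr n (mem_subseq tr nt).
case/orP: tA => /allP tA.
- right; exists (A `\` [set` t]).
  have tA' : [set` t] `<=` A by move=> n /tA /asboolP.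
  rewrite -{1}(setDUK tA') (subsum_setU_const_run hx _ (x k)) ?tj ?addrK //.
  by move=> n nt; split; [exact: xt | case].
- left; exists ([set` t] `|` A).
  rewrite (subsum_setU_const_run hx _ (x k)) ?tj //.
  by move=> n nt; split; [exact: xt | move: (tA n nt) => /asboolPn].
Qed.
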